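(* Let $P$ be a finite poset and $t\geq 2$, $n\geq 2$ integers. Suppose $\mathcal{F}\subseteq[t]^n$ is induced $P$-saturated and $i\in[n]$ is not separating for $\mathcal{F}$. Then $D_i(\mathcal{F})=\{D_i(f):f\in\mathcal{F}\}$ is an induced $P$-saturated family in $[t]^{n-1}$.
   Context: $[n]=\{1,\dots,n\}$; $[t]^n$ is the set of functions $f:[n]\to[t]$ ordered by $f\leq g$ iff $f(j)\leq g(j)$ for all $j$. An induced copy of $P$ in $\mathcal{F}\subseteq[t]^n$ is an injective map $\phi:P\to\mathcal{F}$ with $\phi(x)\leq\phi(y)$ iff $x\leq_P y$. $\mathcal{F}$ is induced $P$-saturated if it contains no induced copy of $P$ and for every $f\in[t]^n\setminus\mathcal{F}$, $\mathcal{F}\cup\{f\}$ contains an induced copy of $P$. For $f\in[t]^n$, $D_i(f)\in[t]^{n-1}$ is given by $D_i(f)(x)=f(x)$ for $x<i$ and $D_i(f)(x)=f(x+1)$ for $i\leq x\leq n-1$. Coordinate $i$ is separating for $\mathcal{F}$ if there exist distinct $f,f'\in\mathcal{F}$ with $D_i(f)\leq D_i(f')$ and $f(i)>f'(i)$. *)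

From mathcomp Require Import all_boot all_order.
Set Implicit Arguments. Unset Strict Implicit. Unset Printing Implicit Defensive.
Import Order.TTheory.

(* The grid [t]^n, encoded as functions 'I_n -> 'I_t (values 0..t-1,
   coordinates 0..n-1), ordered pointwise. *)
Definition grid (n t : nat) := {ffun 'I_n -> 'I_t}.

Definition gle (n t : nat) (f g : grid n t) : bool :=
  [forall j, (f j <= g j)%N].

Definition induced_copy (d : Order.disp_t) (P : finPOrderType d) (n t : nat)
    (F : {set grid n t}) (phi : P -> grid n t) : Prop :=
  injective phi /\ (forall x, phi x \in F) /\
  (forall x y : P, gle (phi x) (phi y) = (x <= y)%O).

Definition contains_induced (d : Order.disp_t) (P : finPOrderType d) (n t : nat)
    (F : {set grid n t}) : Prop :=
  exists phi : P -> grid n t, induced_copy F phi.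

Definition induced_saturated (d : Order.disp_t) (P : finPOrderType d) (n t : nat)
    (F : {set grid n t}) : Prop :=
  ~ contains_induced P F /\
  (forall f : grid n t, f \notin F -> contains_induced P (f |: F)).

Definition Del (m t : nat) (i : 'I_m.+1) (f : grid m.+1 t) : grid m t :=
  [ffun x => f (lift i x)].

Definition separating (m t : nat) (F : {set grid m.+1 t}) (i : 'I_m.+1) : Prop :=
  exists f f', [/\ f \in F, f' \in F, f != f',
                   gle (Del i f) (Del i f') & (f' i < f i)%N].

Definition Del_set (m t : nat) (i : 'I_m.+1) (F : {set grid m.+1 t}) :
  {set grid m t} := [set Del i f | f in F].

From mathcomp Require Import all_boot all_order.
Import Order.TTheory.

Set Implicit Arguments.
Unset Strict Implicit.
Unset Printing Implicit Defensive.

(* If coordinate i is not separating, D_i is an order embedding of F, so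
   induced copies of P transfer between F and D_i(F) in both directions.
   For saturation, given g outside D_i(F), reinsert coordinate i into g with
   the largest value v that an f in F with D_i(f) <= g takes at i.  Then D_i
   is still an order embedding of F plus the new point: anything of F below
   it has i-th value at most v by the choice of v, and anything of F above
   it dominates every such f by non-separation.  The copy of P that the new
   point creates in F therefore projects to one in D_i(F) plus g. *)

Lemma gle_refl n t (f : grid n t) : gle f f.
Proof. exact/forallP. Qed.

Lemma gle_trans n t (f g h : grid n t) : gle f g -> gle g h -> gle f h.
Proof.
by move=> /forallP fg /forallP gh; apply/forallP=> j; apply: leq_trans (fg j) (gh j).
Qed.

Lemma gle_Del m t (i : 'I_m.+1) (f g : grid m.+1 t) :
  gle f g = gle (Del i f) (Del i g) && (f i <= g i)%N.
Proof.
apply/forallP/andP => [fg | [/forallP fg fgi] j].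
  by split; [apply/forallP=> x; rewrite !ffunE | ].
by case: (unliftP i j) => [x -> | ->] //; have := fg x; rewrite !ffunE.
Qed.

Lemma induced_copy_of_gle d (P : finPOrderType d) n t (F : {set grid n t})
    (phi : P -> grid n t) :
  (forall x, phi x \in F) -> (forall x y, gle (phi x) (phi y) = (x <= y)%O) ->
  induced_copy F phi.
Proof.
move=> phiF phi_le; split=> // x y exy.
by apply/le_anti; rewrite -!phi_le exy gle_refl.
Qed.

Lemma contains_induced_imset d (P : finPOrderType d) n t n' t'
    (h : grid n t -> grid n' t') (A : {set grid n t}) :
  {in A &, forall a b, gle (h a) (h b) = gle a b} ->
  contains_induced P (h @: A) <-> contains_induced P A.
Proof.
move=> h_le; split=> [[phi [_ [phiA phi_le]]] | [phi [_ [phiA phi_le]]]].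
  have [psi psiA phi_h] := fin_all_exists2 (fun x => imsetP (phiA x)).
  exists psi; apply: induced_copy_of_gle => // x y.
  by rewrite -h_le // -phi_h -phi_h.
exists (h \o phi); apply: induced_copy_of_gle => [x | x y] /=.
  exact: imset_f.
by rewrite h_le.
Qed.

Definition Ins m t (i : 'I_m.+1) (g : grid m t) (v : 'I_t) : grid m.+1 t :=
  [ffun j => if unlift i j is Some x then g x else v].

Lemma Del_Ins m t (i : 'I_m.+1) (g : grid m t) (v : 'I_t) : Del i (Ins i g v) = g.
Proof. by apply/ffunP=> x; rewrite !ffunE liftK. Qed.

Lemma Ins_at m t (i : 'I_m.+1) (g : grid m t) (v : 'I_t) : Ins i g v i = v.
Proof. by rewrite ffunE unlift_none. Qed.

Section NonSeparating.

Variables (m t : nat) (F : {set grid m.+1 t.+1}) (i : 'I_m.+1).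
Hypothesis F_nonsep : ~ separating F i.

Lemma gle_Del_nonsep : {in F &, forall f f', gle (Del i f) (Del i f') = gle f f'}.
Proof.
move=> f f' fF f'F; have [<- | f'f] := eqVneq f f'; first by rewrite !gle_refl.
rewrite [RHS](gle_Del i); case fg: gle => //=; apply/esym/idP.
by rewrite leqNgt; apply/negP=> f'f_i; apply: F_nonsep; exists f, f'.
Qed.

Definition top_below (g : grid m t.+1) : nat :=
  \max_(f in F | gle (Del i f) g) f i.

Lemma top_below_lt g : (top_below g < t.+1)%N.
Proof. by rewrite ltnS; apply/bigmax_leqP=> f _; rewrite -ltnS. Qed.

Definition Ins_top (g : grid m t.+1) : grid m.+1 t.+1 :=
  Ins i g (Ordinal (top_below_lt g)).

Lemma gle_Del_Ins_top g :
  {in Ins_top g |: F &, forall a b, gle (Del i a) (Del i b) = gle a b}.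
Proof.
rewrite /Ins_top => a b; rewrite !in_setU1.
case/predU1P=> [-> | aF]; case/predU1P=> [-> | bF]; first by rewrite !gle_refl.
- rewrite [RHS](gle_Del i) Del_Ins Ins_at /=; case gb: gle => //=.
  apply/esym/bigmax_leqP=> f /andP[fF fg].
  have: gle f b by rewrite -gle_Del_nonsep //; apply: gle_trans fg gb.
  by rewrite (gle_Del i) => /andP[].
- rewrite [RHS](gle_Del i) Del_Ins Ins_at /=; case ag: gle => //=.
  by apply/esym; rewrite (leq_bigmax_cond a) // aF ag.
- exact: gle_Del_nonsep.
Qed.

End NonSeparating.

Theorem mainTheorem13 (d : Order.disp_t) (P : finPOrderType d) (t m : nat)
    (ht : (2 <= t)%N) (hn : (2 <= m.+1)%N)
    (F : {set grid m.+1 t}) (i : 'I_m.+1) :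
  induced_saturated P F -> ~ separating F i ->
  induced_saturated P (Del_set i F).
Proof.
case: t ht F => [|t] // _ F [F_free F_sat] F_nonsep; split.
  by move/(contains_induced_imset P (gle_Del_nonsep F_nonsep)).
move=> g gF; have fF : Ins_top F i g \notin F.
  by apply: contra gF => fF; apply/imsetP; exists (Ins_top F i g); rewrite ?Del_Ins.
move/F_sat/(contains_induced_imset P (gle_Del_Ins_top F_nonsep (g := g))): fF.
by rewrite imsetU1 Del_Ins.
Qed.
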